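(* Let $\mathcal{G}_R(\mathcal{N}_R,\mathcal{E}_R)$ be an R-graph rooted at $n_{dst}$ with ingress points $\mathcal{M}$, and let $\mathcal{G}'_R$ be the graph obtained from it by the shortest-path transformation described in the context. Let $f$ and $f'$ be the certain routing functions computed on $\mathcal{G}_R$ and $\mathcal{G}'_R$ respectively. Then $\{i\in\mathcal{N}_R: f(i)\neq 0\}\subseteq\{i\in\mathcal{N}_R: f'(i)\neq 0\}$, i.e., applying the transformation can only increase (not decrease) the set of nodes with certain routes.
   Context: An R-graph is a directed acyclic graph $\mathcal{G}_R(\mathcal{N}_R,\mathcal{E}_R)$ rooted at a destination node $n_{dst}$; an edge $j\to i$ means $i$ may use the routing path learned from its parent $j$; $P_i=\{j:e_{ji}\in\mathcal{E}_R\}$. $n_{dst}$ has a finite set $\mathcal{M}$ of ingress points, and each child of $n_{dst}$ is attached to exactly one ingress point. Certain routing function $f:\mathcal{N}_R\to\mathcal{M}\cup\{0\}$ on a given R-graph: for children $i$ of $n_{dst}$, $f(i)$ is their ingress point; visiting the remaining nodes (other than $n_{dst}$) in a topological order, let $CR_i=\{f(j):j\in P_i\}$; set $f(i)=0$ if $0\in CR_i$ or $|CR_i|\neq 1$, and otherwise set $f(i)$ to the unique element of $CR_i$. Shortest-path transformation: set $L_{n_{dst}}=0$ and $L_i=\infty$ for all other nodes; visiting the nodes other than $n_{dst}$ in a topological order, set $L_i=\min\{L_i,\min_{j\in P_i}(L_j+1)\}$ and then remove from $\mathcal{E}_R$ every edge $j\to i$ with $L_j+1>L_i$. *)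

From mathcomp Require Import all_boot.
Set Implicit Arguments. Unset Strict Implicit. Unset Printing Implicit Defensive.

(* Nodes form a finite type T. A graph is an edge relation E : rel T, where
   E j i means there is an edge j -> i (j is a parent of i). *)

Section RGraph.
Variable T : finType.

Definition topo_order (E : rel T) (s : seq T) : Prop :=
  perm_eq s (enum T) /\ (forall j i, E j i -> index j s < index i s).

Definition is_Rgraph (E : rel T) (dst : T) : Prop :=
  [/\ exists s, topo_order E s,
      forall i, ~~ E i dst &
      forall i, connect E dst i].

Variable M : eqType.   (* ingress points; None encodes the value 0 *)

Definition cr_step (E : rel T) (dst : T) (g : T -> option M) (i : T)
  : T -> option M :=
  if (i == dst) || E dst i then g else
  let CR := undup [seq g j | j <- enum T & E j i] in
  let v := match CR with [:: Some m] => Some m | _ => None end in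
  fun x => if x == i then v else g x.

Definition certain_route (E : rel T) (dst : T) (ing : T -> M) (s : seq T)
  : T -> option M :=
  foldl (cr_step E dst)
        (fun i => if E dst i then Some (ing i) else None) s.

(* extended naturals: None = infinity *)
Definition succx (a : option nat) : option nat := omap S a.
Definition minx (a b : option nat) : option nat :=
  match a, b with
  | Some x, Some y => Some (minn x y)
  | Some x, None => Some x
  | None, b => b
  end.
Definition ltx (a b : option nat) : bool :=
  match a, b with
  | Some x, Some y => x < y
  | Some _, None => true
  | None, _ => false
  end.

Definition sp_step (dst : T) (st : (T -> option nat) * rel T) (i : T)
  : (T -> option nat) * rel T :=
  let: (L, E) := st in
  if i == dst then (L, E) else
  let Li := minx (L i) (foldr minx None [seq succx (L j) | j <- enum T & E j i]) in
  let L' := fun x => if x == i then Li else L x in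
  let E' := fun a b => E a b && ~~ ((b == i) && ltx (L' b) (succx (L' a))) in
  (L', E').

Definition sp_transform (E : rel T) (dst : T) (s : seq T) : rel T :=
  (foldl (sp_step dst)
         ((fun i => if i == dst then Some 0 else None), E) s).2.

End RGraph.

From mathcomp Require Import all_boot.
Set Implicit Arguments. Unset Strict Implicit. Unset Printing Implicit Defensive.

(* The transformation only deletes edges, never detaches a node from the root's
   children, and leaves every node other than dst with at least one parent: the
   one realising its shortest-path label.  Since a node's certain route is
   determined by its parents, and the surviving parents of a certain node are
   (inductively, along a topological order of the new graph) certain with the
   same ingress point, every certain node stays certain. *)

Section TopologicalOrder.
Variable T : finType.

Lemma topo_order_split (E : rel T) s x : topo_order E s ->
  exists p1 p2, [/\ s = p1 ++ x :: p2, x \notin p1, x \notin p2 &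
                    forall j, E j x -> j \notin x :: p2].
Proof.
case=> perm_s lt_s.
have xs : x \in s by rewrite (perm_mem perm_s) mem_enum.
have: uniq s by rewrite (perm_uniq perm_s) enum_uniq.
move: lt_s; case/splitPr: xs => p1 p2 lt_s.
rewrite cat_uniq => /and3P[_ disj /andP[xNp2 _]].
have xNp1 : x \notin p1 by apply: contra disj => xp1; apply/hasP; exists x; rewrite ?inE ?eqxx.
exists p1, p2; split=> // j /lt_s; rewrite !index_cat (negbTE xNp1) /= eqxx addn0.
case: ifP => [jp1 _ | _]; last by rewrite ltnNge leq_addr.
by apply: contra disj => jx; apply/hasP; exists j.
Qed.

Lemma topo_order_irrefl (E : rel T) s x : topo_order E s -> ~~ E x x.
Proof. by case=> _ lt_s; apply/negP => /lt_s; rewrite ltnn. Qed.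

Lemma connect_neq_parent (E : rel T) r x :
  connect E r x -> x != r -> exists j, E j x.
Proof.
case/connectP=> p; case/lastP: p => [|p y] /= ; first by move=> _ ->; rewrite eqxx.
by rewrite rcons_path last_rcons => /andP[_ ejy] -> _; exists (last r p).
Qed.

End TopologicalOrder.

Section CertainRoute.
Variables (T : finType) (M : eqType).

Definition certain_value (l : seq (option M)) : option M :=
  if undup l is [:: Some m] then Some m else None.

Lemma certain_value_Some l m x :
  certain_value l = Some m -> x \in l -> x = Some m.
Proof.
rewrite /certain_value -mem_undup.
by case: (undup l) => [|[m'|] [|? ?]] // [<-]; rewrite inE => /eqP.
Qed.

Lemma certain_value_const l m :
  Some m \in l -> {in l, forall x, x = Some m} -> certain_value l = Some m.
Proof.
move=> ml const_l; rewrite /certain_value (@perm_small_eq _ (undup l) [:: Some m]) //.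
apply: uniq_perm => // [|x]; first exact: undup_uniq.
by rewrite mem_undup inE; apply/idP/eqP => [/const_l | ->].
Qed.

Variables (E : rel T) (dst : T) (ing : T -> M).

Lemma cr_step_neq (g : T -> option M) i y : y != i -> cr_step E dst g i y = g y.
Proof. by move=> /negbTE yNi; rewrite /cr_step; case: ifP => //= _; rewrite yNi. Qed.

Lemma foldl_cr_step_notin (g : T -> option M) q y :
  y \notin q -> foldl (cr_step E dst) g q y = g y.
Proof.
elim: q g => //= i q IHq g; rewrite inE negb_or => /andP[yNi yNq].
by rewrite IHq // cr_step_neq.
Qed.

Lemma certain_routeE s x : topo_order E s ->
  certain_route E dst ing s x =
    if E dst x then Some (ing x) else if x == dst then None
    else certain_value [seq certain_route E dst ing s j | j <- enum T & E j x].
Proof.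
move=> topo_s; have [p1 [p2 [-> xNp1 xNp2 parentsNp2]]] := topo_order_split x topo_s.
set g := foldl (cr_step E dst) (fun i => if E dst i then Some (ing i) else None) p1.
have route_parent j : E j x -> certain_route E dst ing (p1 ++ x :: p2) j = g j.
  by move=> /parentsNp2 jNp2; rewrite /certain_route foldl_cat foldl_cr_step_notin.
rewrite {1}/certain_route foldl_cat /= foldl_cr_step_notin // -/g /cr_step.
have gx : g x = if E dst x then Some (ing x) else None by rewrite /g foldl_cr_step_notin.
case: (E dst x) gx => gx; first by rewrite orbT.
rewrite orbF; case: eqP => // _ /=; rewrite eqxx.
congr certain_value; apply/esym/eq_in_map => j.
by rewrite mem_filter => /andP[/route_parent].
Qed.

End CertainRoute.

Section CertainRouteSubgraph.
Variables (T : finType) (M : eqType) (dst : T) (ing : T -> M).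
Variables (E E' : rel T) (s s' : seq T).
Hypotheses (topo_s : topo_order E s) (topo_s' : topo_order E' s').
Hypothesis sub_E' : forall a b, E' a b -> E a b.
Hypothesis dst_child_E' : forall i, E dst i -> E' dst i.
Hypothesis parent_E' : forall i, i != dst -> exists j, E' j i.

Lemma certain_route_subgraph i m :
  certain_route E dst ing s i = Some m -> certain_route E' dst ing s' i = Some m.
Proof.
have [n] := ubnP (index i s'); elim: n i m => // n IHn i m lt_i_n.
rewrite (certain_routeE _ _ _ topo_s) (certain_routeE _ _ _ topo_s').
case: (boolP (E dst i)) => [/dst_child_E' -> // | NEdi].
have -> : E' dst i = false by apply/negbTE; apply: contra NEdi; apply: sub_E'.
case: eqP => // /eqP iNdst route_i.
have route_parents j : E' j i -> certain_route E' dst ing s' j = Some m.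
  move=> E'ji; apply: IHn; first exact: leq_trans (topo_s'.2 _ _ E'ji) lt_i_n.
  by apply: certain_value_Some route_i _; rewrite map_f // mem_filter sub_E' ?mem_enum.
have [j0 E'j0i] := parent_E' iNdst.
apply: certain_value_const => [|y /mapP[j]].
  by rewrite -(route_parents j0) // map_f // mem_filter E'j0i mem_enum.
by rewrite mem_filter => /andP[/route_parents <- _] ->.
Qed.

End CertainRouteSubgraph.

Section ShortestPathTransform.
Variables (T : finType) (dst : T).

Definition min_succ_parents (L : T -> option nat) (E : rel T) (x : T) : option nat :=
  foldr minx None [seq succx (L j) | j <- enum T & E j x].

Lemma foldr_minx_mem l k : foldr minx None l = Some k -> Some k \in l.
Proof.
elim: l k => //= [[x|] l IHl] k; rewrite inE; last by move/IHl ->; rewrite orbT.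
case min_l: (foldr minx None l) => [y|] [<-]; last by rewrite eqxx.
by case: leqP; rewrite ?eqxx // (IHl _ min_l) orbT.
Qed.

Lemma sp_step_other st i y : (y == dst) || (y != i) ->
  (sp_step dst st i).1 y = st.1 y /\ forall a, (sp_step dst st i).2 a y = st.2 a y.
Proof.
case: st => L E y_other; rewrite /sp_step; case: eqP => [// | /eqP iNdst] /=.
have /negbTE -> : y != i by case/orP: y_other => // /eqP ->; rewrite eq_sym.
by split=> // a; rewrite andbT.
Qed.

Lemma foldl_sp_step_other q st y : (y == dst) || (y \notin q) ->
  (foldl (sp_step dst) st q).1 y = st.1 y /\
  forall a, (foldl (sp_step dst) st q).2 a y = st.2 a y.
Proof.
elim: q st => [|i q IHq] st //=; rewrite inE negb_or => y_other.
have y_other_q : (y == dst) || (y \notin q) by case/orP: y_other => [-> | /andP[_ ->]]; rewrite ?orbT.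
have y_other_i : (y == dst) || (y != i) by case/orP: y_other => [-> | /andP[-> _]]; rewrite ?orbT.
have [L1 E1] := IHq (sp_step dst st i) y_other_q.
have [L2 E2] := sp_step_other st y_other_i.
by split=> [|a]; rewrite ?L1 ?L2 ?E1 ?E2.
Qed.

Lemma sp_transform_sub E s a b : sp_transform E dst s a b -> E a b.
Proof.
rewrite /sp_transform; set st := (_, E); rewrite -[E]/st.2; clearbody st.
elim: s st => //= i s IHs [L E'] /IHs.
by rewrite /sp_step; case: eqP => //= _ /andP[].
Qed.

(* [L] is the labelling at the moment [x] is visited: the edges into [x] are
   decided then and never touched again. *)
Lemma sp_transform_in_edges E s x : topo_order E s -> x != dst ->
  exists L, L dst = Some 0 /\ forall a, a != x ->
    sp_transform E dst s a x = E a x && ~~ ltx (min_succ_parents L E x) (succx (L a)).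
Proof.
move=> topo_s xNdst; have [p1 [p2 [-> xNp1 xNp2 _]]] := topo_order_split x topo_s.
rewrite /sp_transform foldl_cat.
set st0 := (_, E).
have [L_x E_x] := foldl_sp_step_other st0 (introT orP (or_intror xNp1)).
have [L_dst _] := foldl_sp_step_other (q := p1) st0 (introT orP (or_introl (eqxx dst))).
case: (foldl _ st0 p1) L_x E_x L_dst => L E1 L_x E_x L_dst.
rewrite /= (negbTE xNdst) in L_x E_x; rewrite /= eqxx in L_dst.
exists L; split=> // a aNx.
have [_ ->] := foldl_sp_step_other (sp_step dst (L, E1) x) (introT orP (or_intror xNp2)).
rewrite /sp_step (negbTE xNdst) /= eqxx L_x (negbTE aNx) E_x.
by congr (_ && ~~ ltx (foldr _ _ (map _ _)) _); apply: eq_filter => j; rewrite E_x.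
Qed.

Lemma sp_transform_dst_child E s x :
  topo_order E s -> E dst x -> sp_transform E dst s dst x.
Proof.
move=> topo_s E_dst_x.
have xNdst : x != dst by apply: contraTneq E_dst_x => ->; apply: topo_order_irrefl topo_s.
have [L [L_dst ->]] := sp_transform_in_edges topo_s xNdst; last by rewrite eq_sym.
rewrite E_dst_x L_dst /min_succ_parents.
case min_x: (foldr _ _ _) => [[|k]|] //.
by have /mapP[j _] := foldr_minx_mem min_x; case: (L j).
Qed.

Lemma sp_transform_parent E s x : topo_order E s -> x != dst ->
  (exists j, E j x) -> exists j, sp_transform E dst s j x.
Proof.
move=> topo_s xNdst [j0 E_j0_x].
have parentNx j : E j x -> j != x.
  by move=> E_j_x; apply: contraTneq E_j_x => ->; apply: topo_order_irrefl topo_s.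
have [L [_ in_edges]] := sp_transform_in_edges topo_s xNdst.
case min_x: (min_succ_parents L E x) => [k|].
  have /mapP[j] := foldr_minx_mem min_x.
  rewrite mem_filter => /andP[E_j_x _] succ_j.
  by exists j; rewrite in_edges ?parentNx // E_j_x min_x -succ_j /= ltnn.
by exists j0; rewrite in_edges ?parentNx // E_j0_x min_x.
Qed.

End ShortestPathTransform.

Theorem theorem3p4 (T : finType) (M : finType) (E : rel T) (dst : T)
    (ing : T -> M) (s s_sp s' : seq T) :
  is_Rgraph E dst ->
  topo_order E s ->
  topo_order E s_sp ->
  topo_order (sp_transform E dst s_sp) s' ->
  forall i : T,
    certain_route E dst ing s i != None ->
    certain_route (sp_transform E dst s_sp) dst ing s' i != None.
Proof.
case=> _ _ reach_dst topo_s topo_sp topo_s' i.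
case route_i: (certain_route E dst ing s i) => [m|] // _.
rewrite (certain_route_subgraph topo_s topo_s' _ _ _ route_i) //.
- exact: sp_transform_sub.
- by move=> x; apply: sp_transform_dst_child.
- by move=> x xNdst; apply: sp_transform_parent; last exact: connect_neq_parent.
Qed.
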